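(* Let $A$ be an MV-algebra and $\operatorname{Der}(A)$ the set of $(\odot,\vee)$-derivations on $A$. Then: (1) if $|A|\ge 3$ then $|\operatorname{Der}(A)|\ge 5$; (2) if $|A|\ge 4$ then $|\operatorname{Der}(A)|\ge 7$; (3) if $|A|\ge 5$ then $|\operatorname{Der}(A)|\ge 13$.
   Context: An MV-algebra is an algebra $(A,\oplus,{}^*,0)$ of type $(2,1,0)$ satisfying: $x\oplus(y\oplus z)=(x\oplus y)\oplus z$, $x\oplus y=y\oplus x$, $x\oplus 0=x$, $x^{**}=x$, $x\oplus 0^*=0^*$, $(x^*\oplus y)^*\oplus y=(y^*\oplus x)^*\oplus x$. Put $1=0^*$ and $x\odot y=(x^*\oplus y^* )^*$. The natural order is $x\le y$ iff $x^*\oplus y=1$, with lattice operations $x\vee y=(x\odot y^* )\oplus y$, $x\wedge y=x\odot(x^*\oplus y)$. A $(\odot,\vee)$-derivation on $A$ is a map $d:A\to A$ with $d(x\odot y)=(d(x)\odot y)\vee(x\odot d(y))$ for all $x,y\in A$. *)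

From Stdlib Require Import List.
Import ListNotations.

Record MVAlgebra := {
  mv_car :> Type;
  mv_oplus : mv_car -> mv_car -> mv_car;
  mv_neg : mv_car -> mv_car;
  mv_zero : mv_car;
  mv_assoc : forall x y z, mv_oplus x (mv_oplus y z) = mv_oplus (mv_oplus x y) z;
  mv_comm : forall x y, mv_oplus x y = mv_oplus y x;
  mv_zero_r : forall x, mv_oplus x mv_zero = x;
  mv_negK : forall x, mv_neg (mv_neg x) = x;
  mv_one_absorb : forall x, mv_oplus x (mv_neg mv_zero) = mv_neg mv_zero;
  mv_luk : forall x y,
    mv_oplus (mv_neg (mv_oplus (mv_neg x) y)) y =
    mv_oplus (mv_neg (mv_oplus (mv_neg y) x)) x
}.

Arguments mv_oplus {_}.
Arguments mv_neg {_}.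
Arguments mv_zero {_}.

Section Ops.
Variable A : MVAlgebra.
Definition mv_one : A := mv_neg mv_zero.
Definition mv_odot (x y : A) : A := mv_neg (mv_oplus (mv_neg x) (mv_neg y)).
Definition mv_join (x y : A) : A := mv_oplus (mv_odot x (mv_neg y)) y.
Definition mv_meet (x y : A) : A := mv_odot x (mv_oplus (mv_neg x) y).
Definition mv_le (x y : A) : Prop := mv_oplus (mv_neg x) y = mv_one.

Definition is_odot_join_derivation (d : A -> A) : Prop :=
  forall x y : A, d (mv_odot x y) = mv_join (mv_odot (d x) y) (mv_odot x (d y)).
End Ops.

(* "the set {x | P x} has at least n elements": there are n pairwise
   distinct elements satisfying P (meaningful for infinite sets too). *)
Definition at_least (T : Type) (n : nat) (P : T -> Prop) : Prop :=
  exists l : list T, NoDup l /\ length l = n /\ Forall P l.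

(* For b ≤ a with a ≠ 0, the map
       d_{a,b}(x) = b   if x = 1,      d_{a,b}(x) = a ⊙ x   otherwise
   is a (⊙,∨)-derivation, and (a,b) ↦ d_{a,b} is injective (evaluating at 1
   recovers b, evaluating at ¬a recovers a).  So it suffices to exhibit many
   "admissible" pairs b ≤ a ≠ 0.  Writing proper elements for those ≠ 0,1:
   - the two pairs (1,0), (1,1) together with (1,p), (p,0), (p,p) for each
     proper p give 3k+2 distinct admissible pairs from k proper elements;
   - "fresh" pairs b ≤ a with a proper and b ∉ {0,a} are new; any two
     distinct proper x,y are comparable (one fresh pair), or complementary,
     or yield two fresh pairs via x∧y or x∨y; among three proper elements at
     most one pair is complementary, which yields two fresh pairs.
   An algebra with n+2 elements has n proper ones, giving the bounds
   5 = 3·1+2, 7 ≤ 3·2+2 and 13 = 3·3+2+2. *)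

From Stdlib Require Import List Classical ClassicalEpsilon Lia.
Import ListNotations.

Lemma at_least_weaken (T : Type) (P : T -> Prop) (m n : nat) :
  n <= m -> at_least T m P -> at_least T n P.
Proof.
  intros Hnm [l [Hnd [Hlen Hall]]].
  exists (firstn n l).
  rewrite <- (firstn_skipn n l) in Hnd, Hall.
  apply Forall_app in Hall as [Hall _].
  repeat split; auto.
  - eapply NoDup_app_remove_r; eauto.
  - apply firstn_length_le; lia.
Qed.

Section MVAlgebraFacts.
Variable A : MVAlgebra.
Local Notation N := (@mv_neg A).
Local Notation Z := (@mv_zero A).
Local Notation one := (mv_one A).
Local Infix "⊕" := (@mv_oplus A) (at level 50, left associativity).
Local Infix "⊙" := (mv_odot A) (at level 40, left associativity).
Local Notation le := (mv_le A).
Local Notation join := (mv_join A).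
Local Notation meet := (mv_meet A).

Lemma negK x : N (N x) = x. Proof. apply mv_negK. Qed.
Lemma neg_inj x y : N x = N y -> x = y.
Proof. intros E. rewrite <- (negK x), E. apply negK. Qed.
Lemma oplus_comm x y : x ⊕ y = y ⊕ x. Proof. apply mv_comm. Qed.
Lemma oplus_assoc x y z : x ⊕ (y ⊕ z) = x ⊕ y ⊕ z. Proof. apply mv_assoc. Qed.
Lemma neg_one : N one = Z. Proof. apply negK. Qed.
Lemma oplus_one x : x ⊕ one = one. Proof. apply mv_one_absorb. Qed.
Lemma one_oplus x : one ⊕ x = one. Proof. rewrite oplus_comm; apply oplus_one. Qed.
Lemma oplus_zero x : x ⊕ Z = x. Proof. apply mv_zero_r. Qed.
Lemma zero_oplus x : Z ⊕ x = x. Proof. rewrite oplus_comm; apply oplus_zero. Qed.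

(* ¬x ⊕ x = 1: the Łukasiewicz axiom instantiated at (x, 1). *)
Lemma neg_oplus x : N x ⊕ x = one.
Proof.
  pose proof (mv_luk A x one) as L. fold (mv_one A) in L.
  rewrite oplus_one, neg_one, zero_oplus in L. now symmetry.
Qed.

Lemma odot_comm x y : x ⊙ y = y ⊙ x.
Proof. unfold mv_odot. now rewrite oplus_comm. Qed.
Lemma odot_assoc x y z : x ⊙ (y ⊙ z) = x ⊙ y ⊙ z.
Proof. unfold mv_odot. now rewrite !negK, oplus_assoc. Qed.
Lemma odot_one x : x ⊙ one = x.
Proof. unfold mv_odot. rewrite neg_one, oplus_zero. apply negK. Qed.
Lemma one_odot x : one ⊙ x = x. Proof. rewrite odot_comm; apply odot_one. Qed.
Lemma odot_neg x : x ⊙ N x = Z.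
Proof. unfold mv_odot. rewrite negK, neg_oplus. apply neg_one. Qed.

(* A nontrivial algebra has 0 ≠ 1: if 0 = 1 then x = x ⊕ 0 = x ⊕ 1 = 1. *)
Lemma zero_ne_one (x y : A) : x <> y -> Z <> one.
Proof.
  intros Hxy E. apply Hxy.
  rewrite <- (oplus_zero x), <- (oplus_zero y), E, !oplus_one. reflexivity.
Qed.

Lemma le_ex x y : le x y <-> exists w, y = x ⊕ w.
Proof.
  unfold mv_le; split.
  - intros H. exists (y ⊙ N x). unfold mv_odot. rewrite negK, oplus_comm.
    rewrite (mv_luk A y x), H, neg_one. symmetry; apply zero_oplus.
  - intros [w ->]. rewrite oplus_assoc, neg_oplus. apply one_oplus.
Qed.

Lemma le_refl x : le x x. Proof. apply neg_oplus. Qed.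
Lemma le_one x : le x one. Proof. apply oplus_one. Qed.
Lemma zero_le x : le Z x. Proof. apply one_oplus. Qed.
Lemma le_oplus x w : le x (w ⊕ x).
Proof. apply le_ex. exists w. apply oplus_comm. Qed.
Lemma oplus_mono x y z : le x y -> le (x ⊕ z) (y ⊕ z).
Proof.
  rewrite !le_ex. intros [w ->]. exists w.
  rewrite <- !oplus_assoc, (oplus_comm w z). reflexivity.
Qed.
Lemma neg_antitone x y : le x y -> le (N y) (N x).
Proof. unfold mv_le. rewrite negK, oplus_comm. auto. Qed.
Lemma odot_mono x y z : le x y -> le (x ⊙ z) (y ⊙ z).
Proof. intros H. apply neg_antitone, oplus_mono, neg_antitone, H. Qed.
Lemma odot_mono_r x y z : le x y -> le (z ⊙ x) (z ⊙ y).
Proof. rewrite (odot_comm z x), (odot_comm z y). apply odot_mono. Qed.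
Lemma odot_le x y : le (x ⊙ y) x.
Proof. rewrite <- (odot_one x) at 2. apply odot_mono_r, le_one. Qed.

Lemma odot_zero_le x y : x ⊙ y = Z -> le y (N x).
Proof.
  unfold mv_odot, mv_le. intros H. rewrite oplus_comm.
  rewrite <- (negK (N x ⊕ N y)), H. reflexivity.
Qed.

Lemma join_comm x y : join x y = join y x.
Proof. unfold mv_join, mv_odot. rewrite !negK. apply mv_luk. Qed.
Lemma le_join x y : le x y -> join x y = y.
Proof.
  unfold mv_join, mv_odot, mv_le. rewrite negK. intros ->.
  rewrite neg_one. apply zero_oplus.
Qed.
Lemma join_idem x : join x x = x. Proof. apply le_join, le_refl. Qed.
Lemma le_join_l x y : le x (join x y).
Proof. rewrite join_comm. apply le_oplus. Qed.
Lemma le_join_r x y : le y (join x y).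
Proof. apply le_oplus. Qed.
Lemma join_le_oplus x y : le (join x y) (x ⊕ y).
Proof. apply oplus_mono, odot_le. Qed.

Lemma le_antisym x y : le x y -> le y x -> x = y.
Proof.
  intros Hxy Hyx. rewrite <- (le_join _ _ Hyx), join_comm. apply le_join, Hxy.
Qed.
Lemma le_one_eq x : le one x -> x = one.
Proof. intros H. apply le_antisym; auto using le_one. Qed.
Lemma le_zero_eq x : le x Z -> x = Z.
Proof. intros H. apply le_antisym; auto using zero_le. Qed.
Lemma le_nonzero x y : le x y -> x <> Z -> y <> Z.
Proof. intros H Hx ->. apply Hx, le_zero_eq, H. Qed.
Lemma odot_eq_one x y : x ⊙ y = one -> x = one.
Proof. intros H. apply le_one_eq. rewrite <- H. apply odot_le. Qed.

Lemma meet_comm x y : meet x y = meet y x.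
Proof.
  unfold mv_meet, mv_odot. f_equal.
  pose proof (mv_luk A (N y) (N x)) as L. rewrite !negK in L.
  rewrite (oplus_comm (N x)), (oplus_comm (N y)), (oplus_comm (N x) y),
    (oplus_comm (N y) x). exact L.
Qed.
Lemma meet_le_l x y : le (meet x y) x. Proof. apply odot_le. Qed.
Lemma meet_le_r x y : le (meet x y) y.
Proof. rewrite meet_comm. apply odot_le. Qed.
Lemma odot_le_meet x y : le (x ⊙ y) (meet x y).
Proof. apply odot_mono_r, le_oplus. Qed.

Lemma complement_unique x y : meet x y = Z -> join x y = one -> y = N x.
Proof.
  intros Hm Hj. apply le_antisym.
  - apply odot_zero_le, le_zero_eq. rewrite <- Hm. apply odot_le_meet.
  - unfold mv_le. rewrite negK. apply le_one_eq. rewrite <- Hj. apply join_le_oplus.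
Qed.

End MVAlgebraFacts.

Section Derivations.
Variable A : MVAlgebra.
Local Notation N := (@mv_neg A).
Local Notation Z := (@mv_zero A).
Local Notation one := (mv_one A).
Local Infix "⊙" := (mv_odot A) (at level 40, left associativity).
Local Notation le := (mv_le A).

Definition deriv (a b : A) (x : A) : A :=
  if excluded_middle_informative (x = one) then b else a ⊙ x.

Lemma deriv_one a b : deriv a b one = b.
Proof. unfold deriv. now destruct excluded_middle_informative. Qed.
Lemma deriv_not_one a b x : x <> one -> deriv a b x = a ⊙ x.
Proof. unfold deriv. now destruct excluded_middle_informative. Qed.

(* d_{a,b} is a (⊙,∨)-derivation whenever b ≤ a.  Since x ⊙ y = 1 only for
   x = y = 1, each case reduces to a join of comparable or equal terms. *)
Lemma deriv_is_derivation a b : le b a -> is_odot_join_derivation A (deriv a b).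
Proof.
  intros Hba x y.
  destruct (classic (x = one)) as [->|Hx]; destruct (classic (y = one)) as [->|Hy].
  - rewrite odot_one, !deriv_one, odot_one, one_odot. symmetry; apply join_idem.
  - rewrite one_odot, deriv_one, !deriv_not_one, one_odot by auto.
    symmetry. apply le_join, odot_mono, Hba.
  - rewrite odot_one, deriv_one, !deriv_not_one, odot_one by auto.
    rewrite join_comm. symmetry. apply le_join.
    rewrite odot_comm. apply odot_mono, Hba.
  - assert (Hxy : x ⊙ y <> one).
    { intros E. apply Hx. eapply odot_eq_one, E. }
    rewrite !deriv_not_one by auto.
    rewrite (odot_assoc A x a y), (odot_comm A x a), <- odot_assoc.
    symmetry; apply join_idem.
Qed.

(* If u ≠ 0 and v ⊙ x = u ⊙ x for all x ≠ 1, then v ≤ u: test at x = ¬u. *)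
Lemma odot_agree_le u v :
  u <> Z -> (forall x, x <> one -> v ⊙ x = u ⊙ x) -> le v u.
Proof.
  intros Hu Hagree.
  assert (Hnu : N u <> one).
  { intros E. apply Hu. rewrite <- (negK A u), E. apply neg_one. }
  specialize (Hagree (N u) Hnu). rewrite odot_neg in Hagree.
  apply odot_zero_le, neg_antitone in Hagree. now rewrite !negK in Hagree.
Qed.

Lemma deriv_inj a b a' b' :
  a <> Z -> a' <> Z -> deriv a b = deriv a' b' -> (a, b) = (a', b').
Proof.
  intros Ha Ha' E.
  assert (Hagree : forall x, x <> one -> a ⊙ x = a' ⊙ x).
  { intros x Hx.
    now rewrite <- (deriv_not_one a b x Hx), <- (deriv_not_one a' b' x Hx), E. }
  f_equal.
  - apply le_antisym; apply odot_agree_le; auto.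
    intros x Hx. symmetry. auto.
  - now rewrite <- (deriv_one a b), E, deriv_one.
Qed.

Definition admissible (f : A * A) : Prop := le (snd f) (fst f) /\ fst f <> Z.

Lemma derivations_of_pairs (l : list (A * A)) :
  NoDup l -> Forall admissible l ->
  at_least (A -> A) (length l) (is_odot_join_derivation A).
Proof.
  intros Hnd Hadm. rewrite Forall_forall in Hadm.
  exists (map (fun f => deriv (fst f) (snd f)) l). repeat split.
  - apply NoDup_map_NoDup_ForallPairs; auto.
    intros [a b] [a' b'] Hf Hf' E.
    destruct (Hadm _ Hf) as [_ Ha]. destruct (Hadm _ Hf') as [_ Ha'].
    exact (deriv_inj a b a' b' Ha Ha' E).
  - apply length_map.
  - apply Forall_map, Forall_forall. intros f Hf. apply deriv_is_derivation, Hadm, Hf.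
Qed.

End Derivations.

Section AdmissiblePairs.
Variable A : MVAlgebra.
Local Notation N := (@mv_neg A).
Local Notation Z := (@mv_zero A).
Local Notation one := (mv_one A).
Local Notation le := (mv_le A).
Local Notation join := (mv_join A).
Local Notation meet := (mv_meet A).

Definition proper (x : A) : Prop := x <> Z /\ x <> one.

Lemma proper_elements (n : nat) :
  at_least A (n + 2) (fun _ => True) ->
  Z <> one /\ exists l, NoDup l /\ n <= length l /\ Forall proper l.
Proof.
  intros [l [Hnd [Hlen _]]]. split.
  - destruct l as [|x [|y l]]; simpl in Hlen; try lia.
    apply (zero_ne_one A x y). intros ->. inversion Hnd; subst. simpl in *; tauto.
  - set (is_proper x := if excluded_middle_informative (proper x) then true else false).
    exists (filter is_proper l). repeat split.
    + apply NoDup_filter, Hnd.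
    + assert (Hrest : length (filter (fun x => negb (is_proper x)) l) <= 2).
      { apply (NoDup_incl_length (l' := [Z; one])); [apply NoDup_filter, Hnd|].
        intros x Hx. apply filter_In in Hx as [_ Hx]. unfold is_proper in Hx.
        destruct excluded_middle_informative as [|Hnp]; [discriminate|].
        destruct (classic (x = Z)) as [->|Hx0]; [simpl; auto|].
        destruct (classic (x = one)) as [->|Hx1]; [simpl; auto|].
        exfalso. apply Hnp. split; auto. }
      rewrite <- (filter_length is_proper l) in Hlen. lia.
    + apply Forall_forall. intros x Hx. apply filter_In in Hx as [_ Hx].
      unfold is_proper in Hx. now destruct excluded_middle_informative.
Qed.

Fixpoint standard_pairs (l : list A) : list (A * A) :=
  match l with
  | [] => [(one, Z); (one, one)]
  | p :: l' => (one, p) :: (p, Z) :: (p, p) :: standard_pairs l'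
  end.

Lemma standard_pairs_length l : length (standard_pairs l) = 3 * length l + 2.
Proof. induction l; simpl; lia. Qed.

Lemma in_standard_pairs l a b :
  In (a, b) (standard_pairs l) ->
  (a = one /\ (b = Z \/ b = one \/ In b l)) \/ (In a l /\ (b = Z \/ b = a)).
Proof.
  induction l as [|p l IH]; simpl.
  - intros [E|[E|[]]]; injection E; intros; subst; tauto.
  - intros [E|[E|[E|H]]]; try (injection E; intros; subst; tauto).
    specialize (IH H). tauto.
Qed.

(* Standard pairs are pairwise distinct; the three pairs added with p mention p,
   while the later ones never do. *)
Lemma standard_pairs_nodup l :
  Z <> one -> NoDup l -> Forall proper l -> NoDup (standard_pairs l).
Proof.
  intros Hz1. induction l as [|p l IH]; intros Hnd Hpr; simpl.
  - constructor; [|repeat constructor; simpl; tauto].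
    simpl. intros [E|[]]. injection E. auto.
  - inversion Hnd as [|? ? Hpl Hnd']; subst.
    inversion Hpr as [|? ? [Hp0 Hp1] Hpr']; subst.
    assert (Hone : ~ In one l).
    { intros Hin. rewrite Forall_forall in Hpr'. now apply (Hpr' one Hin). }
    assert (Hnew : forall a b, In (a, b) (standard_pairs l) -> a <> p /\ b <> p).
    { intros a b Hin. apply in_standard_pairs in Hin. intuition congruence. }
    apply NoDup_cons; [|apply NoDup_cons; [|apply NoDup_cons; [|apply IH; auto]]];
      simpl; intros Hin; repeat destruct Hin as [E|Hin];
      try (injection E; intros; congruence);
      apply Hnew in Hin; tauto.
Qed.

(* Standard pairs are admissible (1 ≠ 0 is needed for (1,0) and (1,1)). *)
Lemma standard_pairs_admissible l :
  Z <> one -> Forall proper l -> Forall (admissible A) (standard_pairs l).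
Proof.
  intros Hz1. induction l as [|p l IH]; intros Hpr; simpl.
  - repeat constructor; simpl; auto using le_refl, zero_le.
  - inversion Hpr as [|? ? [Hp0 Hp1] Hpr']; subst.
    repeat constructor; simpl; auto using le_refl, le_one, zero_le.
Qed.

Definition fresh (f : A * A) : Prop :=
  le (snd f) (fst f) /\ proper (fst f) /\ snd f <> Z /\ snd f <> fst f.

Lemma fresh_not_standard l f : fresh f -> ~ In f (standard_pairs l).
Proof.
  intros [_ [[Ha0 Ha1] [Hb0 Hba]]]. destruct f as [a b]. simpl in *.
  intros Hin. apply in_standard_pairs in Hin. tauto.
Qed.

Lemma many_derivations (l : list A) (F : list (A * A)) :
  Z <> one -> NoDup l -> Forall proper l -> NoDup F -> Forall fresh F ->
  at_least (A -> A) (3 * length l + 2 + length F) (is_odot_join_derivation A).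
Proof.
  intros Hz1 Hnd Hpr HndF HfrF.
  rewrite <- standard_pairs_length, <- length_app.
  apply derivations_of_pairs.
  - apply NoDup_app; auto using standard_pairs_nodup.
    intros f Hstd HinF. rewrite Forall_forall in HfrF.
    exact (fresh_not_standard l f (HfrF f HinF) Hstd).
  - apply Forall_app. split; [apply standard_pairs_admissible; auto|].
    eapply Forall_impl; [|exact HfrF]. intros f [Hle [[Ha0 _] _]]. split; auto.
Qed.

Lemma fresh_pairs_below x y :
  proper x -> proper y -> ~ le x y -> ~ le y x -> meet x y <> Z ->
  fresh (x, meet x y) /\ fresh (y, meet x y).
Proof.
  intros [Hx0 Hx1] [Hy0 Hy1] Hxy Hyx Hm.
  assert (Hmx : meet x y <> x) by (intros E; apply Hxy; rewrite <- E; apply meet_le_r).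
  assert (Hmy : meet x y <> y) by (intros E; apply Hyx; rewrite <- E; apply meet_le_l).
  unfold fresh, proper; simpl. repeat split; auto using meet_le_l, meet_le_r.
Qed.

Lemma fresh_pairs_above x y :
  proper x -> proper y -> ~ le x y -> ~ le y x -> join x y <> one ->
  fresh (join x y, x) /\ fresh (join x y, y).
Proof.
  intros [Hx0 Hx1] [Hy0 Hy1] Hxy Hyx Hj.
  assert (Hj0 : join x y <> Z) by (eapply le_nonzero; eauto using le_join_l).
  assert (Hjx : x <> join x y) by (intros E; apply Hyx; rewrite E; apply le_join_r).
  assert (Hjy : y <> join x y) by (intros E; apply Hxy; rewrite E; apply le_join_l).
  unfold fresh, proper; simpl. repeat split; auto using le_join_l, le_join_r.
Qed.

Definition fresh_on (x y : A) (f : A * A) : Prop :=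
  fresh f /\ (f = (x, y) \/ f = (y, x)).

Lemma fresh_on_sym x y f : fresh_on x y f -> fresh_on y x f.
Proof. unfold fresh_on. tauto. Qed.

Lemma fresh_on_distinct x y z f g :
  x <> y -> y <> z -> fresh_on x y f -> fresh_on x z g -> f <> g.
Proof.
  intros Hxy Hyz [_ Hf] [_ Hg] ->.
  destruct Hf as [-> | ->]; destruct Hg as [E|E]; injection E; intros; congruence.
Qed.

Definition two_fresh_pairs : Prop := exists f g, fresh f /\ fresh g /\ f <> g.

Lemma pair_classification x y :
  proper x -> proper y -> x <> y ->
  two_fresh_pairs \/ (exists f, fresh_on x y f) \/ y = N x.
Proof.
  intros Hx Hy Hxy.
  assert (Hfr : forall a b, proper a -> b <> Z -> b <> a -> le b a -> fresh (a, b)).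
  { intros a b Ha Hb0 Hba Hle. repeat split; auto; apply Ha. }
  destruct (classic (le x y)) as [Lxy|Lxy].
  { right; left. exists (y, x). split; [apply Hfr; auto; apply Hx|auto]. }
  destruct (classic (le y x)) as [Lyx|Lyx].
  { right; left. exists (x, y). split; [apply Hfr; auto; apply Hy|auto]. }
  destruct (classic (meet x y = Z)) as [Hm|Hm].
  - destruct (classic (join x y = one)) as [Hj|Hj].
    + right; right. apply complement_unique; auto.
    + left. destruct (fresh_pairs_above x y) as [F1 F2]; auto.
      exists (join x y, x), (join x y, y). repeat split; try apply F1; try apply F2.
      intros E. injection E. auto.
  - left. destruct (fresh_pairs_below x y) as [F1 F2]; auto.
    exists (x, meet x y), (y, meet x y). repeat split; try apply F1; try apply F2.
    intros E. injection E. auto.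
Qed.

(* Three distinct proper elements yield two distinct fresh pairs: at most one
   of the three pairs among them is complementary. *)
Lemma three_proper_two_fresh p q r :
  proper p -> proper q -> proper r -> p <> q -> p <> r -> q <> r ->
  two_fresh_pairs.
Proof.
  intros Hp Hq Hr Hpq Hpr Hqr.
  destruct (pair_classification p q) as [|[[f Hf]|Epq]]; auto;
  destruct (pair_classification p r) as [|[[g Hg]|Epr]]; auto;
  destruct (pair_classification q r) as [|[[h Hh]|Eqr]]; auto.
  - exists f, g. repeat split; try apply Hf; try apply Hg.
    apply (fresh_on_distinct p q r); auto.
  - exists f, g. repeat split; try apply Hf; try apply Hg.
    apply (fresh_on_distinct p q r); auto.
  - exists f, h. repeat split; try apply Hf; try apply Hh.
    apply (fresh_on_distinct q p r); auto using fresh_on_sym.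
  - exfalso. apply Hpq, (neg_inj A). congruence.
  - exists g, h. repeat split; try apply Hg; try apply Hh.
    apply (fresh_on_distinct r p q); auto using fresh_on_sym.
  - exfalso. apply Hpr. subst. symmetry. apply negK.
  - exfalso. congruence.
  - exfalso. congruence.
Qed.

Lemma fresh_pairs_of (l : list A) :
  NoDup l -> Forall proper l -> 3 <= length l ->
  exists F, NoDup F /\ length F = 2 /\ Forall fresh F.
Proof.
  intros Hnd Hpr Hlen.
  destruct l as [|p [|q [|r l]]]; simpl in Hlen; try lia.
  inversion Hpr as [|? ? Hp [|? ? Hq [|? ? Hr _]]]; subst.
  assert (Hdist : p <> q /\ p <> r /\ q <> r).
  { inversion Hnd as [|? ? Hp' Hnd']; inversion Hnd' as [|? ? Hq' _]; subst.
    simpl in *. intuition. }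
  destruct Hdist as [Hpq [Hpr' Hqr]].
  destruct (three_proper_two_fresh p q r) as [f [g [Hf [Hg Hfg]]]]; auto.
  exists [f; g]. repeat split.
  - repeat constructor; simpl; intuition.
  - now apply Forall_cons; [|apply Forall_cons].
Qed.

End AdmissiblePairs.

Theorem corollary3p15 (A : MVAlgebra) :
  (at_least A 3 (fun _ => True) ->
     at_least (A -> A) 5 (is_odot_join_derivation A)) /\
  (at_least A 4 (fun _ => True) ->
     at_least (A -> A) 7 (is_odot_join_derivation A)) /\
  (at_least A 5 (fun _ => True) ->
     at_least (A -> A) 13 (is_odot_join_derivation A)).
Proof.
  split; [|split]; intros H.
  - destruct (proper_elements A 1 H) as [Hz1 [l [Hnd [Hlen Hpr]]]].
    apply (at_least_weaken _ _ (3 * length l + 2 + length (@nil (A * A)))); [simpl; lia|].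
    apply many_derivations; auto; constructor.
  - destruct (proper_elements A 2 H) as [Hz1 [l [Hnd [Hlen Hpr]]]].
    apply (at_least_weaken _ _ (3 * length l + 2 + length (@nil (A * A)))); [simpl; lia|].
    apply many_derivations; auto; constructor.
  - destruct (proper_elements A 3 H) as [Hz1 [l [Hnd [Hlen Hpr]]]].
    destruct (fresh_pairs_of A l) as [F [HndF [HlenF HfrF]]]; auto.
    apply (at_least_weaken _ _ (3 * length l + 2 + length F)); [lia|].
    apply many_derivations; auto.
Qed.
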